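(* There is an absolute constant $C>0$ such that for every $h\in\mathbb N$ and every $P\in\mathcal C(h)$ all of whose holes are axis-aligned rectangles, $\varrho(P)\le C$.
   Context: For $h\in\mathbb N$, $\mathcal C(h)$ denotes the family of polygonal domains $P=P_0\setminus\bigcup_{i=1}^h \operatorname{int}(P_i)$, where $P_0$ is a convex polygon in the plane and $P_1,\dots,P_h$ (the holes) are pairwise disjoint convex polygons contained in the interior of $P_0$. For $s,t\in P$, ${\rm geod}(s,t)$ is the infimum of the Euclidean lengths of polygonal paths from $s$ to $t$ contained in $P$; ${\rm diam}_2(P)=\sup_{s,t\in P}|st|$, ${\rm diam}_g(P)=\sup_{s,t\in P}{\rm geod}(s,t)$, and $\varrho(P)={\rm diam}_g(P)/{\rm diam}_2(P)$. *)

From Stdlib Require Import Reals List.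
From Coquelicot Require Import Coquelicot.
Import ListNotations.
Open Scope R_scope.

Definition pt : Type := (R * R)%type.

Definition dist (p q : pt) : R :=
  sqrt ((fst p - fst q) ^ 2 + (snd p - snd q) ^ 2).

Definition pinterior (S : pt -> Prop) (p : pt) : Prop :=
  exists r, 0 < r /\ forall q, dist p q < r -> S q.

Fixpoint comb (w : list R) (V : list pt) : pt :=
  match w, V with
  | a :: w', v :: V' => let c := comb w' V' in
      (a * fst v + fst c, a * snd v + snd c)
  | _, _ => (0, 0)
  end.

Definition in_hull (V : list pt) (p : pt) : Prop :=
  exists w : list R, length w = length V /\ List.Forall (fun a => 0 <= a) w /\
    fold_right Rplus 0 w = 1 /\ p = comb w V.

(* A convex polygon: the convex hull of finitely many points, with nonempty
   interior (a genuine 2-dimensional polygon). *)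
Definition convex_polygon (V : list pt) : Prop :=
  exists p, pinterior (in_hull V) p.

Record rect : Type := Rect { rx1 : R; rx2 : R; ry1 : R; ry2 : R }.

Definition rect_ok (Q : rect) : Prop := rx1 Q < rx2 Q /\ ry1 Q < ry2 Q.

Definition in_rect (Q : rect) (p : pt) : Prop :=
  rx1 Q <= fst p <= rx2 Q /\ ry1 Q <= snd p <= ry2 Q.

Definition in_rect_int (Q : rect) (p : pt) : Prop :=
  rx1 Q < fst p < rx2 Q /\ ry1 Q < snd p < ry2 Q.

(* The family C(h) restricted to axis-aligned rectangular holes:
   P_0 = hull V convex polygon, holes Q_0..Q_{h-1} pairwise disjoint
   rectangles contained in the interior of P_0. *)
Definition valid_domain (V : list pt) (h : nat) (Q : nat -> rect) : Prop :=
  convex_polygon V /\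
  (forall i, (i < h)%nat -> rect_ok (Q i)) /\
  (forall i, (i < h)%nat -> forall p, in_rect (Q i) p -> pinterior (in_hull V) p) /\
  (forall i j, (i < h)%nat -> (j < h)%nat -> i <> j ->
     forall p, ~ (in_rect (Q i) p /\ in_rect (Q j) p)).

Definition pdomain (V : list pt) (h : nat) (Q : nat -> rect) (p : pt) : Prop :=
  in_hull V p /\ forall i, (i < h)%nat -> ~ in_rect_int (Q i) p.

Definition seg_in (S : pt -> Prop) (p q : pt) : Prop :=
  forall l, 0 <= l <= 1 ->
    S (fst p + l * (fst q - fst p), snd p + l * (snd q - snd p)).

Fixpoint chain_in (S : pt -> Prop) (p : pt) (l : list pt) (t : pt) : Prop :=
  match l with
  | [] => seg_in S p t
  | q :: l' => seg_in S p q /\ chain_in S q l' t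
  end.

Fixpoint chain_len (p : pt) (l : list pt) (t : pt) : R :=
  match l with
  | [] => dist p t
  | q :: l' => dist p q + chain_len q l' t
  end.

Definition geod (S : pt -> Prop) (s t : pt) : Rbar :=
  Glb_Rbar (fun L => exists l, chain_in S s l t /\ L = chain_len s l t).

Definition diam_2 (S : pt -> Prop) : Rbar :=
  Lub_Rbar (fun L => exists s t, S s /\ S t /\ L = dist s t).

Definition diam_g (S : pt -> Prop) : Rbar :=
  Rbar_lub (fun L => exists s t, S s /\ S t /\ L = geod S s t).

Definition rho (S : pt -> Prop) : Rbar := Rbar_div (diam_g S) (diam_2 S).

(* Let [xl,xr] x [yb,yt] be the bounding box of the outer polygon, of width W
   and height H; the Euclidean diameter of P is at least max(W,H).  From any
   point s of P we build a path inside P to the right side x = xr: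
   - a staircase: while a hole lies straight above the current point, go up
     to the bottom of the lowest such hole, along it to the right and up its
     right side (this path is monotone, of length <= W + H so far);
   - from a point with no hole above, go vertically up to the upper boundary
     of the outer polygon;
   - walk along the upper boundary (gift wrapping along supporting lines) to
     the right side; boundary points are never inside a hole.
   Its length is <= W + 2H.  Joining two such paths along the side x = xr
   gives a path of length <= 2W + 5H <= 7 max(W,H) between any two points. *)

From Stdlib Require Import Reals List Lra Lia Psatz Classical.
From Coquelicot Require Import Coquelicot.
Import ListNotations.
Open Scope R_scope.

Lemma dist_sym (p q : pt) : dist p q = dist q p.
Proof. unfold dist. f_equal. ring. Qed.

Lemma dist_refl (p : pt) : dist p p = 0.
Proof.
  unfold dist. replace ((fst p - fst p) ^ 2 + (snd p - snd p) ^ 2) with 0 by ring.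
  apply sqrt_0.
Qed.

Lemma dist_nonneg (p q : pt) : 0 <= dist p q.
Proof. apply sqrt_pos. Qed.

Lemma dist_ge_dx (p q : pt) : Rabs (fst p - fst q) <= dist p q.
Proof.
  unfold dist. rewrite <- sqrt_Rsqr_abs. apply sqrt_le_1_alt. unfold Rsqr.
  pose proof (pow2_ge_0 (snd p - snd q)). nra.
Qed.

Lemma dist_ge_dy (p q : pt) : Rabs (snd p - snd q) <= dist p q.
Proof.
  unfold dist. rewrite <- sqrt_Rsqr_abs. apply sqrt_le_1_alt. unfold Rsqr.
  pose proof (pow2_ge_0 (fst p - fst q)). nra.
Qed.

Lemma dist_le_l1 (p q : pt) (a b : R) :
  Rabs (fst p - fst q) <= a -> Rabs (snd p - snd q) <= b -> dist p q <= a + b.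
Proof.
  intros Ha Hb. unfold dist.
  pose proof (Rabs_pos (fst p - fst q)); pose proof (Rabs_pos (snd p - snd q)).
  rewrite <- (sqrt_Rsqr (a + b)) by lra.
  apply sqrt_le_1_alt. unfold Rsqr.
  rewrite <- (pow2_abs (fst p - fst q)), <- (pow2_abs (snd p - snd q)). nra.
Qed.

Lemma dist_slope_le (u w : pt) (s : R) :
  fst u <= fst w -> snd w - snd u = s * (fst w - fst u) ->
  (s <= 0 -> dist u w <= (fst w - fst u) + (snd u - snd w)) /\
  (0 <= s -> dist u w <= (fst w - fst u) + (snd w - snd u)).
Proof.
  intros Hx Hy. split; intros Hs; apply dist_le_l1; apply Rabs_le; nra.
Qed.

Lemma comb_halfplane (a b c : R) (V : list pt) : forall w,
  length w = length V ->
  List.Forall (fun v => a * fst v + b * snd v <= c) V -> List.Forall (fun x => 0 <= x) w ->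
  a * fst (comb w V) + b * snd (comb w V) <= c * fold_right Rplus 0 w.
Proof.
  induction V as [|v V IH]; intros w Hl HV Hw.
  - destruct w; simpl in *; [lra | discriminate].
  - destruct w as [|x w]; simpl in *; [discriminate|].
    apply Forall_cons_iff in HV as [Hv HV]. apply Forall_cons_iff in Hw as [Hx Hw].
    specialize (IH w ltac:(lia) HV Hw).
    assert (x * (a * fst v + b * snd v) <= x * c) by (apply Rmult_le_compat_l; auto).
    nra.
Qed.

Lemma hull_halfplane (a b c : R) (V : list pt) (p : pt) :
  (forall v, In v V -> a * fst v + b * snd v <= c) -> in_hull V p ->
  a * fst p + b * snd p <= c.
Proof.
  intros HV [w [Hl [Hw [Hs ->]]]].
  pose proof (comb_halfplane a b c V w Hl) as H.
  rewrite Hs, Rmult_1_r in H. apply H; auto. apply List.Forall_forall; auto.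
Qed.

Fixpoint mix (l : R) (w w' : list R) : list R :=
  match w, w' with a :: w1, b :: w2 => ((1-l)*a + l*b) :: mix l w1 w2 | _, _ => [] end.

Lemma comb_mix (l : R) (V : list pt) : forall w w',
  length w = length V -> length w' = length V ->
  fst (comb (mix l w w') V) = (1-l) * fst (comb w V) + l * fst (comb w' V) /\
  snd (comb (mix l w w') V) = (1-l) * snd (comb w V) + l * snd (comb w' V) /\
  length (mix l w w') = length V /\
  fold_right Rplus 0 (mix l w w') = (1-l) * fold_right Rplus 0 w + l * fold_right Rplus 0 w'.
Proof.
  induction V as [|v V IH]; intros w w' H1 H2.
  - destruct w, w'; simpl in *; try discriminate. repeat split; ring.
  - destruct w as [|a w]; destruct w' as [|b w']; simpl in *; try discriminate.
    destruct (IH w w' ltac:(lia) ltac:(lia)) as [E1 [E2 [E3 E4]]].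
    rewrite E1, E2, E3, E4. repeat split; ring.
Qed.

Lemma mix_nonneg (l : R) : 0 <= l <= 1 -> forall w w',
  List.Forall (fun x => 0 <= x) w -> List.Forall (fun x => 0 <= x) w' ->
  List.Forall (fun x => 0 <= x) (mix l w w').
Proof.
  intros Hl. induction w as [|a w IH]; intros w' H1 H2; destruct w' as [|b w']; simpl; auto.
  inversion H1; inversion H2; subst. constructor; [nra | auto].
Qed.

Lemma hull_convex (V : list pt) (p q : pt) (l : R) :
  in_hull V p -> in_hull V q -> 0 <= l <= 1 ->
  in_hull V (fst p + l * (fst q - fst p), snd p + l * (snd q - snd p)).
Proof.
  intros [w [Hl [Hw [Hs Hp]]]] [w' [Hl' [Hw' [Hs' Hq]]]] Hl0.
  destruct (comb_mix l V w w' Hl Hl') as [E1 [E2 [E3 E4]]].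
  exists (mix l w w'). split; [exact E3|]. split; [apply mix_nonneg; auto|].
  split; [rewrite E4, Hs, Hs'; ring|].
  subst p q. apply injective_projections; simpl; [rewrite E1 | rewrite E2]; ring.
Qed.

Lemma comb_zero (V : list pt) : forall n, comb (repeat 0 n) V = (0, 0).
Proof.
  induction V as [|v V IH]; intros n; destruct n; simpl; auto.
  rewrite IH. simpl. f_equal; ring.
Qed.

Lemma vertex_in_hull (V : list pt) (v : pt) : In v V -> in_hull V v.
Proof.
  induction V as [|u V IH]; intros Hv; [destruct Hv|].
  destruct Hv as [<-|Hv].
  - exists (1 :: repeat 0 (length V)). simpl. rewrite repeat_length.
    split; [auto|]. split.
    + constructor; [lra|]. apply List.Forall_forall. intros x Hx. apply repeat_spec in Hx. lra.
    + assert (Hr : forall n, fold_right Rplus 0 (repeat 0 n) = 0)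
        by (induction n; simpl; auto; rewrite IHn; ring).
      rewrite Hr, comb_zero. split; [ring|]. apply injective_projections; simpl; ring.
  - destruct (IH Hv) as [w [Hl [Hw [Hs Hp]]]].
    exists (0 :: w). simpl. split; [auto|]. split; [constructor; [lra|auto]|].
    split; [rewrite Hs; ring|]. rewrite <- Hp. apply injective_projections; simpl; ring.
Qed.

Lemma hull_nonempty (V : list pt) (p : pt) : in_hull V p -> V <> [].
Proof. intros [w [Hl [_ [Hs _]]]] ->. destruct w; simpl in *; [lra | discriminate]. Qed.

(* An interior point of a set has the four axis-parallel
   neighbours at some distance e in the set; hence a point of a convex hull
   lying on the boundary line of a supporting half-plane is not interior. *)

Lemma interior_in (S : pt -> Prop) (z : pt) : pinterior S z -> S z.
Proof. intros [r [Hr H]]. apply H. rewrite dist_refl. auto. Qed.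

Lemma interior_axis_neighbours (S : pt -> Prop) (z : pt) : pinterior S z ->
  exists e, 0 < e /\ S (fst z + e, snd z) /\ S (fst z - e, snd z) /\
    S (fst z, snd z + e) /\ S (fst z, snd z - e).
Proof.
  intros [r [Hr H]]. exists (r / 2). split; [lra|].
  assert (Hx : forall x, Rabs (fst z - x) <= r / 2 -> dist z (x, snd z) < r).
  { intros x Hd. eapply Rle_lt_trans; [apply (dist_le_l1 _ _ (r / 2) 0)|]; simpl;
      [exact Hd | apply Rabs_le; lra | lra]. }
  assert (Hy : forall y, Rabs (snd z - y) <= r / 2 -> dist z (fst z, y) < r).
  { intros y Hd. eapply Rle_lt_trans; [apply (dist_le_l1 _ _ 0 (r / 2))|]; simpl;
      [apply Rabs_le; lra | exact Hd | lra]. }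
  repeat split; apply H; [apply Hx | apply Hx | apply Hy | apply Hy]; apply Rabs_le; lra.
Qed.

Lemma halfplane_boundary (V : list pt) (a b c : R) (z : pt) :
  (forall y, in_hull V y -> a * fst y + b * snd y <= c) -> (a <> 0 \/ b <> 0) ->
  a * fst z + b * snd z = c -> ~ pinterior (in_hull V) z.
Proof.
  intros Hhalf Hab Hz Hint.
  destruct (interior_axis_neighbours _ _ Hint) as [e [He [H1 [H2 [H3 H4]]]]].
  apply Hhalf in H1, H2, H3, H4. simpl in *.
  destruct Hab as [Ha|Hb]; [destruct (Rtotal_order a 0) as [Hs|[Hs|Hs]]
                          | destruct (Rtotal_order b 0) as [Hs|[Hs|Hs]]]; nra.
Qed.

Lemma seg_refl (S : pt -> Prop) (p : pt) : S p -> seg_in S p p.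
Proof.
  intros H l Hl.
  replace (fst p + l * (fst p - fst p), snd p + l * (snd p - snd p)) with p; auto.
  apply injective_projections; simpl; ring.
Qed.

Lemma seg_rev (S : pt -> Prop) (p q : pt) : seg_in S p q -> seg_in S q p.
Proof.
  intros H l Hl. specialize (H (1 - l) ltac:(lra)).
  replace (fst q + l * (fst p - fst q)) with (fst p + (1 - l) * (fst q - fst p)) by ring.
  replace (snd q + l * (snd p - snd q)) with (snd p + (1 - l) * (snd q - snd p)) by ring.
  exact H.
Qed.

Lemma chain_app (S : pt -> Prop) (p : pt) (l1 : list pt) (q : pt) (l2 : list pt) (r : pt) :
  chain_in S p l1 q -> chain_in S q l2 r ->
  chain_in S p (l1 ++ q :: l2) r /\
  chain_len p (l1 ++ q :: l2) r = chain_len p l1 q + chain_len q l2 r.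
Proof.
  revert p. induction l1 as [|a l1 IH]; intros p H1 H2; simpl in *.
  - split; auto.
  - destruct H1 as [H1a H1b]. destruct (IH a H1b H2) as [E1 E2].
    split; auto. rewrite E2. ring.
Qed.

Lemma chain_rev (S : pt -> Prop) (p : pt) (l : list pt) (q : pt) : chain_in S p l q ->
  exists l', chain_in S q l' p /\ chain_len q l' p = chain_len p l q.
Proof.
  revert p. induction l as [|a l IH]; intros p H; simpl in *.
  - exists []. simpl. split; [apply seg_rev; auto | apply dist_sym].
  - destruct H as [Ha Hb]. destruct (IH a Hb) as [l' [H1 H2]].
    assert (H3 : chain_in S a [] p) by (simpl; apply seg_rev; auto).
    destruct (chain_app S q l' a [] p H1 H3) as [E1 E2].
    exists (l' ++ [a]). split; auto. rewrite E2, H2. simpl. rewrite (dist_sym a p). ring.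
Qed.

Lemma chain_len_nonneg (p : pt) (l : list pt) (q : pt) : 0 <= chain_len p l q.
Proof.
  revert p. induction l as [|a l IH]; intros p; simpl; [apply dist_nonneg|].
  pose proof (dist_nonneg p a). pose proof (IH a). lra.
Qed.

Lemma geod_le (S : pt -> Prop) (s t : pt) (l : list pt) :
  chain_in S s l t -> Rbar_le (geod S s t) (chain_len s l t).
Proof.
  intros H. apply (Glb_Rbar_correct (fun L => exists l, chain_in S s l t /\ L = chain_len s l t)).
  exists l; auto.
Qed.

Lemma geod_nonneg (S : pt -> Prop) (s t : pt) : Rbar_le (Finite 0) (geod S s t).
Proof.
  apply (Glb_Rbar_correct (fun L => exists l, chain_in S s l t /\ L = chain_len s l t)).
  intros x [l [_ ->]]. apply chain_len_nonneg.
Qed.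

Lemma rho_le_of_chains (S : pt -> Prop) (d K M : R) :
  0 < d ->
  (exists s t, S s /\ S t /\ d <= dist s t) ->
  (forall s t, S s -> S t -> dist s t <= M) ->
  (forall s t, S s -> S t -> exists l, chain_in S s l t /\ chain_len s l t <= K * d) ->
  Rbar_le (rho S) (Finite K).
Proof.
  intros Hd [s0 [t0 [Hs0 [Ht0 Hd0]]]] HM Hchain.
  unfold rho, diam_2, diam_g.
  set (E2 := fun L => exists s t, S s /\ S t /\ L = dist s t).
  destruct (Lub_Rbar_correct E2) as [Hub2 Hlub2].
  assert (Hdiam_le : Rbar_le (Lub_Rbar E2) (Finite M)).
  { apply Hlub2. intros x [s [t [Hs [Ht ->]]]]. apply HM; auto. }
  assert (Hdiam_ge : Rbar_le (Finite d) (Lub_Rbar E2)).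
  { apply Rbar_le_trans with (dist s0 t0); [exact Hd0|]. apply Hub2. exists s0, t0; auto. }
  destruct (Lub_Rbar E2) as [D| |]; simpl in Hdiam_le, Hdiam_ge; try contradiction.
  set (E3 := fun L : Rbar => exists s t, S s /\ S t /\ L = geod S s t).
  unfold Rbar_lub. destruct (Rbar_ex_lub E3) as [g [Hub3 Hlub3]]. simpl.
  assert (Hg_le : Rbar_le g (Finite (K * d))).
  { apply Hlub3. intros x [s [t [Hs [Ht ->]]]].
    destruct (Hchain s t Hs Ht) as [l [Hl Hlen]].
    apply Rbar_le_trans with (chain_len s l t); [apply geod_le; auto | exact Hlen]. }
  assert (Hg_ge : Rbar_le (Finite 0) g).
  { apply Rbar_le_trans with (geod S s0 s0); [apply geod_nonneg|]. apply Hub3. exists s0, s0; auto. }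
  destruct g as [g| |]; simpl in Hg_le, Hg_ge; try contradiction.
  simpl. apply Rmult_le_reg_r with D; [lra|].
  replace (g * / D * D) with g by (field; lra). nra.
Qed.

Lemma list_max {A : Type} (f : A -> R) (l : list A) : l <> [] ->
  exists a, In a l /\ forall b, In b l -> f b <= f a.
Proof.
  induction l as [|x l IH]; intros H; [congruence|].
  destruct l as [|y l'].
  - exists x. split; [left; auto|]. intros b [Hb|[]]; subst; lra.
  - destruct (IH ltac:(congruence)) as [a [Ha Hb]].
    destruct (Rle_dec (f x) (f a)).
    + exists a. split; [right; auto|]. intros b [Hb'|Hb']; [subst; auto | auto].
    + exists x. split; [left; auto|]. intros b [Hb'|Hb']; [subst; lra|].
      specialize (Hb b Hb'). lra.
Qed.

Lemma finite_argmin (Pr : nat -> Prop) (f : nat -> R) (h : nat) :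
  (exists k, (k < h)%nat /\ Pr k) ->
  exists k, (k < h)%nat /\ Pr k /\ forall j, (j < h)%nat -> Pr j -> f k <= f j.
Proof.
  induction h as [|h IH]; intros [k0 [Hk0 Hp0]]; [lia|].
  destruct (classic (exists k, (k < h)%nat /\ Pr k)) as [Hex|Hno].
  - destruct (IH Hex) as [k [Hk [Hpk Hmin]]].
    destruct (classic (Pr h /\ f h < f k)) as [[Hph Hlt]|Hnot].
    + exists h. split; [lia|]. split; auto. intros j Hj Hpj.
      destruct (Nat.eq_dec j h) as [->|Hjh]; [lra|].
      specialize (Hmin j ltac:(lia) Hpj). lra.
    + exists k. split; [lia|]. split; auto. intros j Hj Hpj.
      destruct (Nat.eq_dec j h) as [->|Hjh]; [|apply Hmin; auto; lia].
      apply Rnot_lt_le. intro Hlt. apply Hnot. auto.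
  - assert (k0 = h) as ->.
    { destruct (Nat.eq_dec k0 h); auto. exfalso. apply Hno. exists k0. split; auto; lia. }
    exists h. split; [lia|]. split; auto. intros j Hj Hpj.
    destruct (Nat.eq_dec j h) as [->|Hjh]; [lra|].
    exfalso. apply Hno. exists j. split; auto; lia.
Qed.

Lemma filter_length_le {A : Type} (f g : A -> bool) (l : list A) :
  (forall i, In i l -> f i = true -> g i = true) ->
  (length (filter f l) <= length (filter g l))%nat.
Proof.
  induction l as [|x l IH]; intros H; simpl; [lia|].
  specialize (IH (fun i Hi => H i (or_intror Hi))).
  destruct (f x) eqn:E1.
  - rewrite (H x (or_introl eq_refl) E1). simpl. lia.
  - destruct (g x); simpl; lia.
Qed.

Lemma filter_length_lt {A : Type} (f g : A -> bool) (l : list A) :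
  (forall i, In i l -> f i = true -> g i = true) ->
  (exists k, In k l /\ g k = true /\ f k = false) ->
  (length (filter f l) < length (filter g l))%nat.
Proof.
  induction l as [|x l IH]; intros H [k [Hk [Hg Hf]]]; [destruct Hk|].
  simpl. destruct Hk as [->|Hk].
  - rewrite Hg, Hf. simpl.
    pose proof (filter_length_le f g l (fun i Hi => H i (or_intror Hi))). lia.
  - specialize (IH (fun i Hi => H i (or_intror Hi)) (ex_intro _ k (conj Hk (conj Hg Hf)))).
    destruct (f x) eqn:E1.
    + rewrite (H x (or_introl eq_refl) E1). simpl. lia.
    + destruct (g x); simpl; lia.
Qed.

(* Walking along the upper boundary of a convex polygon (gift wrapping). *)

Definition upper_support (V : list pt) (u : pt) (m : R) : Prop :=
  forall q, In q V -> snd q - snd u <= m * (fst q - fst u).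

Definition boundary_closed (V : list pt) (S : pt -> Prop) : Prop :=
  forall z, in_hull V z -> ~ pinterior (in_hull V) z -> S z.

(* Number of vertices strictly to the right of u: the termination measure. *)
Definition n_right (V : list pt) (u : pt) : nat :=
  length (filter (fun q => if Rlt_dec (fst u) (fst q) then true else false) V).

Lemma n_right_decr (V : list pt) (u w : pt) :
  In w V -> fst u < fst w -> (n_right V w < n_right V u)%nat.
Proof.
  intros Hw Huw. apply filter_length_lt.
  - intros q _. destruct (Rlt_dec (fst w) (fst q)); [|discriminate].
    destruct (Rlt_dec (fst u) (fst q)); auto; lra.
  - exists w. split; auto.
    destruct (Rlt_dec (fst u) (fst w)); [|lra]. destruct (Rlt_dec (fst w) (fst w)); [lra|auto].
Qed.

Lemma upper_support_hull (V : list pt) (u : pt) (m : R) (z : pt) :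
  upper_support V u m -> in_hull V z -> snd z - snd u <= m * (fst z - fst u).
Proof.
  intros Hs Hz.
  assert (H : (-m) * fst z + 1 * snd z <= snd u - m * fst u).
  { apply (hull_halfplane _ _ _ V); auto. intros v Hv. specialize (Hs v Hv). lra. }
  lra.
Qed.

Lemma upper_support_move (V : list pt) (u b : pt) (m : R) :
  upper_support V u m -> snd b - snd u = m * (fst b - fst u) -> upper_support V b m.
Proof. intros H E q Hq. specialize (H q Hq). lra. Qed.

Lemma support_line_not_interior (V : list pt) (u : pt) (m : R) (z : pt) :
  upper_support V u m -> snd z - snd u = m * (fst z - fst u) -> ~ pinterior (in_hull V) z.
Proof.
  intros Hs Hz. apply (halfplane_boundary V (- m) 1 (snd u - m * fst u)); [| right; lra | lra].
  intros y Hy. pose proof (upper_support_hull V u m y Hs Hy). lra.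
Qed.

Lemma support_segment (V : list pt) (S : pt -> Prop) (u w : pt) (m : R) :
  boundary_closed V S -> in_hull V u -> in_hull V w -> upper_support V u m ->
  snd w - snd u = m * (fst w - fst u) -> seg_in S u w.
Proof.
  intros HS Hu Hw Hs E l Hl. apply HS; [apply hull_convex; auto|].
  apply (support_line_not_interior V u m); auto. simpl.
  replace (snd u + l * (snd w - snd u) - snd u) with (l * (snd w - snd u)) by ring.
  rewrite E. ring.
Qed.

Lemma steepest_right (V : list pt) (u : pt) : (exists v, In v V /\ fst u < fst v) ->
  exists w s, In w V /\ fst u < fst w /\ snd w - snd u = s * (fst w - fst u) /\
    forall q, In q V -> fst u < fst q -> snd q - snd u <= s * (fst q - fst u).
Proof.
  intros [v [Hv Hvu]].
  set (right_of := fun q : pt => if Rlt_dec (fst u) (fst q) then true else false).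
  assert (Hright : forall q, In q (filter right_of V) <-> In q V /\ fst u < fst q).
  { intros q. rewrite filter_In. unfold right_of.
    destruct (Rlt_dec (fst u) (fst q)); split; intros [H1 H2]; auto; try discriminate; lra. }
  destruct (list_max (fun q => (snd q - snd u) / (fst q - fst u)) (filter right_of V))
    as [w [Hw Hmax]].
  { intros E. assert (H : In v (filter right_of V)) by (apply Hright; auto).
    rewrite E in H. destruct H. }
  apply Hright in Hw as [Hw Hwu].
  exists w, ((snd w - snd u) / (fst w - fst u)). split; auto. split; auto. split.
  - field. lra.
  - intros q Hq Hqu. specialize (Hmax q (proj2 (Hright q) (conj Hq Hqu))). simpl in Hmax.
    replace (snd q - snd u) with ((snd q - snd u) / (fst q - fst u) * (fst q - fst u))
      by (field; lra).
    apply Rmult_le_compat_r; lra.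
Qed.

Lemma gift_step (V : list pt) (u : pt) (m : R) :
  upper_support V u m -> (exists v, In v V /\ fst u < fst v) ->
  exists w s, In w V /\ fst u < fst w /\ s <= m /\
    snd w - snd u = s * (fst w - fst u) /\ upper_support V u s.
Proof.
  intros Hs Hex. destruct (steepest_right V u Hex) as [w [s [Hw [Hwu [Es Hsteep]]]]].
  assert (Hsm : s <= m) by (specialize (Hs w Hw); nra).
  exists w, s. repeat split; auto.
  intros q Hq. destruct (Rlt_dec (fst u) (fst q)) as [Hqu|Hqu]; [apply Hsteep; auto|].
  specialize (Hs q Hq). nra.
Qed.

Lemma left_support (V : list pt) (xl : R) :
  (exists v, In v V /\ fst v = xl) -> (forall v, In v V -> xl <= fst v) ->
  exists W m, In W V /\ fst W = xl /\ upper_support V W m.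
Proof.
  intros [vl [Hvl Evl]] Hmin.
  set (on_left := fun q : pt => if Req_EM_T (fst q) xl then true else false).
  assert (Hleft : forall q, In q (filter on_left V) <-> In q V /\ fst q = xl).
  { intros q. rewrite filter_In. unfold on_left.
    destruct (Req_EM_T (fst q) xl); split; intros [H1 H2]; auto; try discriminate; lra. }
  destruct (list_max snd (filter on_left V)) as [W [HW Htop]].
  { intros E. assert (H : In vl (filter on_left V)) by (apply Hleft; auto).
    rewrite E in H. destruct H. }
  apply Hleft in HW as [HW EW].
  assert (Hcol : forall q, In q V -> fst q = xl -> snd q - snd W <= 0).
  { intros q Hq Eq. specialize (Htop q (proj2 (Hleft q) (conj Hq Eq))). lra. }
  destruct (classic (exists q, In q V /\ fst W < fst q)) as [Hex|Hno].
  - destruct (steepest_right V W Hex) as [w [s [_ [_ [_ Hsteep]]]]].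
    exists W, s. repeat split; auto. intros q Hq.
    destruct (Req_EM_T (fst q) xl) as [Eq|Nq].
    + rewrite Eq, EW. specialize (Hcol q Hq Eq). lra.
    + apply Hsteep; auto. specialize (Hmin q Hq). lra.
  - exists W, 0. repeat split; auto. intros q Hq.
    destruct (Req_EM_T (fst q) xl) as [Eq|Nq].
    + rewrite Eq, EW. specialize (Hcol q Hq Eq). lra.
    + exfalso. apply Hno. exists q. split; auto. specialize (Hmin q Hq). lra.
Qed.

Lemma edge_point_in_hull (V : list pt) (u w : pt) (s x0 : R) :
  in_hull V u -> in_hull V w -> snd w - snd u = s * (fst w - fst u) ->
  fst u < fst w -> fst u <= x0 <= fst w -> in_hull V (x0, snd u + s * (x0 - fst u)).
Proof.
  intros Hu Hw Es Huw Hx0.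
  set (l := (x0 - fst u) / (fst w - fst u)).
  assert (Hl : 0 <= l <= 1).
  { unfold l. split; [apply Rdiv_le_0_compat; lra|].
    apply Rmult_le_reg_r with (fst w - fst u); [lra|].
    replace ((x0 - fst u) / (fst w - fst u) * (fst w - fst u)) with (x0 - fst u)
      by (field; lra). lra. }
  replace (x0, snd u + s * (x0 - fst u))
    with (fst u + l * (fst w - fst u), snd u + l * (snd w - snd u)); [apply hull_convex; auto|].
  unfold l. rewrite Es. apply injective_projections; simpl; field; lra.
Qed.

(* The walk is
   x-monotone, first rising then falling, so its length is at most the
   horizontal extent plus the two vertical descents from the top level Ymax;
   once the slope is nonpositive it only falls. *)
Lemma upper_walk (V : list pt) (S : pt -> Prop) (Ymax : R) :
  boundary_closed V S -> (forall v, In v V -> snd v <= Ymax) ->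
  forall u m x0, in_hull V u -> upper_support V u m -> fst u <= x0 ->
  (exists v, In v V /\ x0 <= fst v) ->
  exists l b m', fst b = x0 /\ in_hull V b /\ upper_support V b m' /\ chain_in S u l b /\
    (m <= 0 -> chain_len u l b <= (x0 - fst u) + (snd u - snd b)) /\
    chain_len u l b <= (x0 - fst u) + (2 * Ymax - snd u - snd b).
Proof.
  intros HS HY.
  assert (HYh : forall z, in_hull V z -> snd z <= Ymax).
  { intros z Hz. assert (0 * fst z + 1 * snd z <= Ymax); [|lra].
    apply (hull_halfplane _ _ _ V); auto. intros v Hv. specialize (HY v Hv). lra. }
  intros u m x0 Hu Hs Hx0 Hv.
  remember (n_right V u) as n eqn:En. revert u m Hu Hs Hx0 En.
  induction n as [n IH] using Wf_nat.lt_wf_ind. intros u m Hu Hs Hx0 En.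
  destruct (Req_dec x0 (fst u)) as [E|E].
  { exists [], u, m. simpl. rewrite dist_refl. specialize (HYh u Hu).
    repeat split; auto; try lra.
    apply seg_refl, HS; auto. apply (support_line_not_interior V u m); auto. ring. }
  assert (Hux : fst u < x0) by (destruct Hx0 as [Hlt|Heq]; [exact Hlt | congruence]).
  destruct Hv as [v [Hv Hxv]].
  assert (Hvu : fst u < fst v) by lra.
  destruct (gift_step V u m Hs (ex_intro _ v (conj Hv Hvu)))
    as [w [s [Hw [Hwu [Hsm [Es Hsu]]]]]].
  pose proof (HYh u Hu) as HYu.
  destruct (Rle_dec x0 (fst w)) as [Hle|Hgt].
  -
    set (b := (x0, snd u + s * (x0 - fst u))).
    assert (Eb : snd b - snd u = s * (fst b - fst u)) by (simpl; ring).
    assert (Hb : in_hull V b)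
      by (apply (edge_point_in_hull V u w s x0 Hu (vertex_in_hull V w Hw) Es Hwu); lra).
    exists [], b, s. simpl.
    destruct (dist_slope_le u b s ltac:(simpl; lra) Eb) as [Hneg Hpos].
    pose proof (HYh b Hb) as HYb. simpl in Hneg, Hpos, HYb.
    repeat split; auto.
    + apply upper_support_move with u; auto.
    + apply (support_segment V S u b s); auto.
    + intros Hm0. apply Hneg. lra.
    + destruct (Rle_lt_dec s 0) as [Hs0|Hs0];
        [specialize (Hneg Hs0) | specialize (Hpos (Rlt_le _ _ Hs0))]; lra.
  -
    assert (Hwx : fst w <= x0) by lra.
    assert (Hdecr : (n_right V w < n)%nat) by (subst n; apply n_right_decr; auto).
    destruct (IH (n_right V w) Hdecr w s (vertex_in_hull V w Hw)
                 (upper_support_move V u w s Hsu Es) Hwx eq_refl)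
      as [l [b [m' [Eb [Hb [Hsb [Hc [Hneg' Hlen']]]]]]]].
    exists (w :: l), b, m'. simpl.
    destruct (dist_slope_le u w s ltac:(lra) Es) as [Hneg Hpos].
    pose proof (HYh w (vertex_in_hull V w Hw)).
    repeat split; auto.
    + apply (support_segment V S u w s); auto. apply vertex_in_hull; auto.
    + intros Hm0. assert (Hs0 : s <= 0) by lra.
      specialize (Hneg Hs0). specialize (Hneg' Hs0). lra.
    + destruct (Rle_lt_dec s 0) as [Hs0|Hs0].
      * specialize (Hneg Hs0). specialize (Hneg' Hs0). lra.
      * specialize (Hpos (Rlt_le _ _ Hs0)). lra.
Qed.

Lemma bounding_box (V : list pt) : V <> [] ->
  exists xl xr yb yt,
    (forall z, in_hull V z -> xl <= fst z <= xr /\ yb <= snd z <= yt) /\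
    (exists v, In v V /\ fst v = xl) /\ (exists v, In v V /\ fst v = xr) /\
    (exists v, In v V /\ snd v = yb) /\ (exists v, In v V /\ snd v = yt).
Proof.
  intros HV.
  destruct (list_max (fun v => - fst v) V HV) as [vl [Hvl Ml]].
  destruct (list_max fst V HV) as [vr [Hvr Mr]].
  destruct (list_max (fun v => - snd v) V HV) as [vb [Hvb Mb]].
  destruct (list_max snd V HV) as [vt [Hvt Mt]].
  exists (fst vl), (fst vr), (snd vb), (snd vt).
  split; [|repeat split; eauto].
  intros z Hz.
  assert ((-1) * fst z + 0 * snd z <= - fst vl).
  { apply (hull_halfplane _ _ _ V); auto. intros v Hv. specialize (Ml v Hv). lra. }
  assert (1 * fst z + 0 * snd z <= fst vr).
  { apply (hull_halfplane _ _ _ V); auto. intros v Hv. specialize (Mr v Hv). lra. }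
  assert (0 * fst z + (-1) * snd z <= - snd vb).
  { apply (hull_halfplane _ _ _ V); auto. intros v Hv. specialize (Mb v Hv). lra. }
  assert (0 * fst z + 1 * snd z <= snd vt).
  { apply (hull_halfplane _ _ _ V); auto. intros v Hv. specialize (Mt v Hv). lra. }
  lra.
Qed.

Section RectangularDomain.

Variables (V : list pt) (h : nat) (Q : nat -> rect).
Hypothesis Hvalid : valid_domain V h Q.

Local Notation P := (pdomain V h Q).

Lemma hole_interior (i : nat) (z : pt) :
  (i < h)%nat -> in_rect (Q i) z -> pinterior (in_hull V) z.
Proof. destruct Hvalid as [_ [_ [Hin _]]]. intros Hi. apply Hin, Hi. Qed.

Lemma boundary_in_domain : boundary_closed V P.
Proof.
  intros z Hz Hnint. split; auto. intros i Hi Hint.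
  apply Hnint, (hole_interior i); auto. unfold in_rect_int, in_rect in *. lra.
Qed.

Lemma segment_in_domain (a b : pt) : in_hull V a -> in_hull V b ->
  (forall l, 0 <= l <= 1 -> forall i, (i < h)%nat ->
     ~ in_rect_int (Q i) (fst a + l * (fst b - fst a), snd a + l * (snd b - snd a))) ->
  seg_in P a b.
Proof. intros Ha Hb H l Hl. split; [apply hull_convex; auto | intros i Hi; apply H; auto]. Qed.

(* The boundary of a hole belongs to P, the holes being pairwise disjoint. *)
Lemma hole_boundary_in_domain (k : nat) (z : pt) :
  (k < h)%nat -> in_rect (Q k) z -> ~ in_rect_int (Q k) z -> P z.
Proof.
  intros Hk Hz Hnint. split; [apply interior_in, (hole_interior k); auto|].
  intros i Hi Hint. destruct (Nat.eq_dec i k) as [->|Hik]; [contradiction|].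
  destruct Hvalid as [_ [_ [_ Hdisj]]]. apply (Hdisj i k Hi Hk Hik z). split; auto.
  unfold in_rect_int, in_rect in *. lra.
Qed.

Definition blocks (p : pt) (i : nat) : Prop :=
  rx1 (Q i) < fst p < rx2 (Q i) /\ snd p <= ry1 (Q i).

Definition n_above (y : R) : nat :=
  length (filter (fun i => if Rle_dec y (ry1 (Q i)) then true else false) (seq 0 h)).

Lemma n_above_decr (y y' : R) (k : nat) :
  (k < h)%nat -> y <= ry1 (Q k) < y' -> (n_above y' < n_above y)%nat.
Proof.
  intros Hk Hy. apply filter_length_lt.
  - intros i _. destruct (Rle_dec y' (ry1 (Q i))); [|discriminate].
    destruct (Rle_dec y (ry1 (Q i))); auto; lra.
  - exists k. split; [apply in_seq; lia|].
    destruct (Rle_dec y (ry1 (Q k))); [|lra]. destruct (Rle_dec y' (ry1 (Q k))); [lra|auto].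
Qed.

(* One step of the staircase: from p, blocked by the lowest hole k above it,
   go up to the bottom side of k, right to its corner and up its right side.
   The path is monotone in both coordinates. *)
Lemma stair_step (p : pt) (k : nat) : P p -> (k < h)%nat -> blocks p k ->
  (forall j, (j < h)%nat -> blocks p j -> ry1 (Q k) <= ry1 (Q j)) ->
  exists l d, chain_in P p l d /\ P d /\
    chain_len p l d <= (fst d - fst p) + (snd d - snd p) /\ ry1 (Q k) < snd d.
Proof.
  intros [Hp Hpi] Hk [Hx Hy] Hlowest.
  destruct Hvalid as [_ [Hok _]]. destruct (Hok k Hk) as [Hok1 Hok2].
  set (x1 := rx1 (Q k)) in *. set (x2 := rx2 (Q k)) in *.
  set (y1 := ry1 (Q k)) in *. set (y2 := ry2 (Q k)) in *.
  set (a := (fst p, y1)). set (c := (x2, y1)). set (d := (x2, y2)).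
  assert (Hside : forall z, x1 <= fst z <= x2 -> y1 <= snd z <= y2 ->
                   (fst z = x2 \/ snd z = y1 \/ snd z = y2) -> P z).
  { intros z Hzx Hzy Hzb. apply (hole_boundary_in_domain k); auto.
    - unfold in_rect. fold x1 x2 y1 y2. lra.
    - unfold in_rect_int. fold x1 x2 y1 y2. lra. }
  exists [a; c], d. simpl. split; [split; [|split]|split].
  -
    apply segment_in_domain; auto.
    { apply interior_in, (hole_interior k); auto. unfold in_rect, a; simpl. fold x1 x2 y1 y2. lra. }
    intros l Hl i Hi Hint. unfold a in Hint. unfold in_rect_int in Hint. simpl in Hint.
    replace (fst p + l * (fst p - fst p)) with (fst p) in Hint by ring.
    destruct (Rle_dec (snd p) (ry1 (Q i))) as [Hpy|Hpy].
    + assert (Hblock : blocks p i) by (split; lra).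
      specialize (Hlowest i Hi Hblock). nra.
    + apply (Hpi i Hi). unfold in_rect_int. nra.
  - intros l Hl. apply Hside; unfold a, c; simpl; [split; nra | split; nra | right; left; ring].
  - intros l Hl. apply Hside; unfold c, d; simpl; [split; nra | split; nra | left; ring].
  - apply Hside; unfold d; simpl; [split; lra | split; lra | left; reflexivity].
  - split; [|unfold d; simpl; lra].
    assert (D1 : dist p a <= 0 + (y1 - snd p)) by (apply dist_le_l1; unfold a; simpl; apply Rabs_le; lra).
    assert (D2 : dist a c <= (x2 - fst p) + 0) by (apply dist_le_l1; unfold a, c; simpl; apply Rabs_le; lra).
    assert (D3 : dist c d <= 0 + (y2 - y1)) by (apply dist_le_l1; unfold c, d; simpl; apply Rabs_le; lra).
    change (dist p a + (dist a c + dist c d) <= (x2 - fst p) + (y2 - snd p)). lra.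
Qed.

Lemma staircase (p : pt) : P p ->
  exists l q, chain_in P p l q /\ P q /\
    chain_len p l q <= (fst q - fst p) + (snd q - snd p) /\
    forall i, (i < h)%nat -> ~ blocks q i.
Proof.
  remember (n_above (snd p)) as n eqn:En. revert p En.
  induction n as [n IH] using Wf_nat.lt_wf_ind. intros p En Hp.
  destruct (classic (exists k, (k < h)%nat /\ blocks p k)) as [Hex|Hno].
  - destruct (finite_argmin (blocks p) (fun i => ry1 (Q i)) h Hex) as [k [Hk [Hbk Hlowest]]].
    destruct (stair_step p k Hp Hk Hbk Hlowest) as [l [d [Hc [Hd [Hlen Hup]]]]].
    assert (Hdecr : (n_above (snd d) < n)%nat).
    { subst n. apply (n_above_decr _ _ k Hk). destruct Hbk. lra. }
    destruct (IH _ Hdecr d eq_refl Hd) as [l' [q [Hc' [Hq [Hlen' Hfree]]]]].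
    destruct (chain_app _ p l d l' q Hc Hc') as [Ec El].
    exists (l ++ d :: l'), q. split; [exact Ec|]. split; [exact Hq|].
    split; [rewrite El; lra | exact Hfree].
  - exists [], p. simpl. rewrite dist_refl.
    split; [apply seg_refl; auto|]. split; [auto|]. split; [lra|].
    intros i Hi Hb. apply Hno. exists i; auto.
Qed.

Lemma vertical_exit (q b : pt) : P q -> (forall i, (i < h)%nat -> ~ blocks q i) ->
  in_hull V b -> fst b = fst q -> snd q <= snd b -> seg_in P q b.
Proof.
  intros [Hq Hqi] Hfree Hb Ebq Hqb. apply segment_in_domain; auto.
  intros l Hl i Hi Hint. rewrite Ebq in Hint. unfold in_rect_int in Hint. simpl in Hint.
  replace (fst q + l * (fst q - fst q)) with (fst q) in Hint by ring.
  destruct (Rle_dec (snd q) (ry1 (Q i))) as [Hy|Hy].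
  - apply (Hfree i Hi). split; lra.
  - apply (Hqi i Hi). unfold in_rect_int. nra.
Qed.

Variables (xl xr yb yt : R).
Hypothesis Hbox : forall z, in_hull V z -> xl <= fst z <= xr /\ yb <= snd z <= yt.
Hypothesis Hleft : exists v, In v V /\ fst v = xl.
Hypothesis Hright : exists v, In v V /\ fst v = xr.
Hypothesis Hbottom : exists v, In v V /\ snd v = yb.
Hypothesis Htop : exists v, In v V /\ snd v = yt.

(* Hull points on the sides of the bounding box are boundary points, hence in P. *)
Lemma box_side_in_domain (z : pt) : in_hull V z ->
  (fst z = xl \/ fst z = xr \/ snd z = yb \/ snd z = yt) -> P z.
Proof.
  intros Hz Hside. apply boundary_in_domain; auto.
  destruct Hside as [E|[E|[E|E]]].
  - apply (halfplane_boundary V (-1) 0 (- xl)); [|left; lra|lra].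
    intros y Hy. pose proof (Hbox y Hy). lra.
  - apply (halfplane_boundary V 1 0 xr); [|left; lra|lra].
    intros y Hy. pose proof (Hbox y Hy). lra.
  - apply (halfplane_boundary V 0 (-1) (- yb)); [|right; lra|lra].
    intros y Hy. pose proof (Hbox y Hy). lra.
  - apply (halfplane_boundary V 0 1 yt); [|right; lra|lra].
    intros y Hy. pose proof (Hbox y Hy). lra.
Qed.

(* Every point of P reaches the right side of the bounding box by a path of
   length <= width + 2 height: staircase, vertical exit to the upper boundary,
   then the walk along the upper boundary. *)
Lemma path_to_right_side (s : pt) : P s ->
  exists l e, chain_in P s l e /\ in_hull V e /\ fst e = xr /\
    chain_len s l e <= (xr - xl) + 2 * (yt - yb).
Proof.
  intros Hs.
  assert (Hvert : forall v, In v V -> xl <= fst v <= xr /\ yb <= snd v <= yt)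
    by (intros v Hv; apply Hbox, vertex_in_hull; auto).
  assert (Hbelow : forall v, In v V -> snd v <= yt) by (intros v Hv; apply Hvert; auto).
  destruct Hright as [vr [Hvr Er]].
  destruct (staircase s Hs) as [l1 [q [C1 [Hq [L1 Hfree]]]]].
  destruct (left_support V xl Hleft (fun v Hv => proj1 (proj1 (Hvert v Hv))))
    as [W [m0 [HW [EW HsW]]]].
  pose proof (Hbox q (proj1 Hq)) as Hqbox.
  assert (HWq : fst W <= fst q) by lra.
  assert (Hqr : fst q <= fst vr) by lra.
  destruct (upper_walk V P yt boundary_in_domain Hbelow W m0 (fst q)
              (vertex_in_hull V W HW) HsW HWq (ex_intro _ vr (conj Hvr Hqr)))
    as [_ [b [m [Eb [Hb [Hsb _]]]]]].
  assert (Hqb : snd q <= snd b).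
  { pose proof (upper_support_hull V b m q Hsb (proj1 Hq)). rewrite Eb in H. lra. }
  assert (C2 : chain_in P q [] b) by (apply vertical_exit; auto).
  pose proof (Hbox b Hb) as Hbbox.
  assert (Hbr : fst b <= xr) by lra.
  assert (Hrr : xr <= fst vr) by lra.
  destruct (upper_walk V P yt boundary_in_domain Hbelow b m xr Hb Hsb Hbr
              (ex_intro _ vr (conj Hvr Hrr)))
    as [l3 [e [_ [Ee [He [_ [C3 [_ L3]]]]]]]].
  destruct (chain_app _ q [] b l3 e C2 C3) as [C23 L23].
  destruct (chain_app _ s l1 q _ e C1 C23) as [C L].
  eexists _, e. split; [exact C|]. split; [exact He|].
  split; [exact Ee|]. rewrite L, L23. simpl.
  assert (Dqb : dist q b <= 0 + (snd b - snd q)) by (apply dist_le_l1; apply Rabs_le; lra).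
  pose proof (Hbox s (proj1 Hs)). pose proof (Hbox e He). lra.
Qed.

(* Any two points of P are joined inside P by a chain of length
   <= 2 width + 5 height: both go to the right side, which is joined
   vertically. *)
Lemma chain_between_points (s t : pt) : P s -> P t ->
  exists l, chain_in P s l t /\ chain_len s l t <= 2 * (xr - xl) + 5 * (yt - yb).
Proof.
  intros Hs Ht.
  destruct (path_to_right_side s Hs) as [ls [es [Cs [Hes [Ees Ls]]]]].
  destruct (path_to_right_side t Ht) as [lt [et [Ct [Het [Eet Lt]]]]].
  destruct (chain_rev _ _ _ _ Ct) as [lt' [Ct' Lt']].
  assert (Cm : chain_in P es [] et).
  { intros l Hl. apply box_side_in_domain; [apply hull_convex; auto|]. simpl.
    rewrite Ees, Eet. right; left; ring. }
  destruct (chain_app _ _ _ _ _ _ Cm Ct') as [C1 L1].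
  destruct (chain_app _ _ _ _ _ _ Cs C1) as [C2 L2].
  exists (ls ++ es :: [] ++ et :: lt'). split; [exact C2|]. rewrite L2, L1, Lt'. simpl.
  pose proof (Hbox es Hes). pose proof (Hbox et Het).
  assert (Dm : dist es et <= 0 + (yt - yb)) by (apply dist_le_l1; apply Rabs_le; lra).
  lra.
Qed.

(* The box has positive width, the outer polygon having an interior point. *)
Lemma box_width_pos : xl < xr.
Proof.
  destruct Hvalid as [[p0 Hp0] _].
  destruct (interior_axis_neighbours _ _ Hp0) as [e [He [Hplus [Hminus _]]]].
  apply Hbox in Hplus, Hminus. simpl in *. lra.
Qed.

Lemma extreme_pair :
  exists s t, P s /\ P t /\ Rmax (xr - xl) (yt - yb) <= dist s t.
Proof.
  destruct Hleft as [vl [Hvl El]]. destruct Hright as [vr [Hvr Er]].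
  destruct Hbottom as [vb [Hvb Eb]]. destruct Htop as [vt [Hvt Et]].
  assert (Hside : forall v, In v V -> (fst v = xl \/ fst v = xr \/ snd v = yb \/ snd v = yt) -> P v)
    by (intros v Hv; apply box_side_in_domain, vertex_in_hull; auto).
  pose proof (Hbox vb (vertex_in_hull V vb Hvb)). pose proof (Hbox vt (vertex_in_hull V vt Hvt)).
  pose proof (Hbox vl (vertex_in_hull V vl Hvl)). pose proof (Hbox vr (vertex_in_hull V vr Hvr)).
  unfold Rmax. destruct (Rle_dec (xr - xl) (yt - yb)).
  - exists vb, vt. split; [apply Hside; [auto | tauto]|]. split; [apply Hside; [auto | tauto]|].
    pose proof (dist_ge_dy vb vt) as Hd. rewrite Rabs_minus_sym, Rabs_right in Hd; lra.
  - exists vl, vr. split; [apply Hside; [auto | tauto]|]. split; [apply Hside; [auto | tauto]|].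
    pose proof (dist_ge_dx vl vr) as Hd. rewrite Rabs_minus_sym, Rabs_right in Hd; lra.
Qed.

End RectangularDomain.

Theorem proposition2 :
  exists C : R, 0 < C /\
    forall (h : nat) (V : list pt) (Q : nat -> rect),
      valid_domain V h Q ->
      Rbar_le (rho (pdomain V h Q)) (Finite C).
Proof.
  exists 7. split; [lra|]. intros h V Q Hvalid.
  pose proof Hvalid as [[p0 Hp0] _].
  destruct (bounding_box V (hull_nonempty V p0 (interior_in _ _ Hp0)))
    as [xl [xr [yb [yt [Hbox [Hleft [Hright [Hbottom Htop]]]]]]]].
  pose proof (box_width_pos V h Q Hvalid xl xr yb yt Hbox) as Hwidth.
  pose proof (Rmax_l (xr - xl) (yt - yb)). pose proof (Rmax_r (xr - xl) (yt - yb)).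
  apply (rho_le_of_chains _ (Rmax (xr - xl) (yt - yb)) 7 ((xr - xl) + (yt - yb))).
  - lra.
  - exact (extreme_pair V h Q Hvalid xl xr yb yt Hbox Hleft Hright Hbottom Htop).
  - (* the Euclidean diameter is at most the l1 diameter of the box *)
    intros s t Hs Ht. pose proof (Hbox s (proj1 Hs)). pose proof (Hbox t (proj1 Ht)).
    apply dist_le_l1; apply Rabs_le; lra.
  - intros s t Hs Ht.
    destruct (chain_between_points V h Q Hvalid xl xr yb yt Hbox Hleft Hright s t Hs Ht)
      as [l [Hl Hlen]].
    exists l. split; [exact Hl | lra].
Qed.
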